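(* Let $u$ and $v$ be two vertices of a graph $G$ such that $u\cong_m v$ and the distance between $u$ and $v$ in $G$ is more than $2m$. Then $u\cong^D_m v$, i.e. Duplicator wins the $m$-round differential game between $u$ and $v$.
   Context: Graphs are finite, simple, undirected, loopless, possibly labelled with unary predicates. $N(u)$ is the neighbourhood of $u$ and $D(u,v):=N(u)\,\Delta\,N(v)$. $u\cong_m v$ means Duplicator wins the standard $m$-round Ehrenfeucht–Fraïssé game on $(G,u)$ and $(G,v)$ (equivalently, $u,v$ satisfy the same FO formulas of quantifier rank $m$). Differential game from $(\bar a,\bar b)$ on a single graph $G$: in each round, with current tuples $(a_1,\dots,a_n),(b_1,\dots,b_n)$, Spoiler chooses $i\le n$ and $v\in D(a_i,b_i)$ and declares whether $v$ becomes $a_{n+1}$ or $b_{n+1}$ (if all $D(a_i,b_i)$ are empty, Duplicator wins); Duplicator answers with a vertex $w\in D(a_i,b_i)$ (same $i$), which becomes the other of $b_{n+1},a_{n+1}$. After the rounds, Duplicator wins iff $a_i\mapsto b_i$ is a label-preserving isomorphism between the induced subgraphs on the $a$'s and $b$'s. $u\cong^D_m v$ means Duplicator has a winning strategy in the $m$-round differential game from $((u),(v))$. *)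

From mathcomp Require Import all_boot.
Set Implicit Arguments. Unset Strict Implicit. Unset Printing Implicit Defensive.

Section Games.
Variables (T : finType) (e : rel T) (I : Type) (lab : I -> pred T).

Definition nbhd (u : T) : {set T} := [set w | e u w].

Definition symdiff_nbhd (u v : T) : {set T} :=
  (nbhd u :\: nbhd v) :|: (nbhd v :\: nbhd u).

(* The map a_i |-> b_i is a
   label-preserving isomorphism between the induced subgraphs on the a's and
   the b's (well-defined and injective, preserving adjacency and labels). *)
Definition piso (p : seq (T * T)) : Prop :=
  forall x y, x \in p -> y \in p ->
    (x.1 == y.1) = (x.2 == y.2) /\ e x.1 y.1 = e x.2 y.2 /\
    (forall l, lab l x.1 = lab l x.2).

Fixpoint EFwin (k : nat) (p : seq (T * T)) : Prop :=
  match k with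
  | 0 => piso p
  | k'.+1 =>
      (forall x, exists y, EFwin k' (rcons p (x, y))) /\
      (forall y, exists x, EFwin k' (rcons p (x, y)))
  end.

Definition EFequiv (m : nat) (u v : T) : Prop := EFwin m [:: (u, v)].

(* Differential game: Spoiler picks a pair q = (a_i,b_i) of the position and
   x in D(a_i,b_i), declaring it a_{n+1} or b_{n+1}; Duplicator answers with
   w in D(a_i,b_i) (same i).  If all D(a_i,b_i) are empty, Duplicator wins. *)
Fixpoint DiffWin (k : nat) (p : seq (T * T)) : Prop :=
  match k with
  | 0 => piso p
  | k'.+1 =>
      (forall q, q \in p -> symdiff_nbhd q.1 q.2 = set0) \/
      (forall q, q \in p -> forall x, x \in symdiff_nbhd q.1 q.2 ->
         (exists2 w, w \in symdiff_nbhd q.1 q.2 & DiffWin k' (rcons p (x, w))) /\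
         (exists2 w, w \in symdiff_nbhd q.1 q.2 & DiffWin k' (rcons p (w, x))))
  end.

Definition Dequiv (m : nat) (u v : T) : Prop := DiffWin m [:: (u, v)].

(* within k x y : there is a walk of length at most k from x to y,
   i.e. dist(x,y) <= k (dist = infinity if no path). *)
Fixpoint within (k : nat) (x y : T) : bool :=
  match k with
  | 0 => x == y
  | k'.+1 => within k' x y || [exists z, e x z && within k' z y]
  end.

End Games.

From mathcomp Require Import all_boot.
From mathcomp Require Import zify.

(* Duplicator copies a winning strategy of the m-round EF game on (u, v).
   After i rounds every EF pebble pair (a, b) has a within distance i of u
   and b within distance i of v.  A vertex x of D(a, b) is adjacent to
   exactly one of a, b; pebbling x on that side of the EF game yields an
   answer y adjacent to the other one, and y is too close to the opposite
   root to be adjacent to the first one, so y lies in D(a, b) as well.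
   Spoiler may declare x on either side, so the differential position is the
   EF position with some pairs swapped.  Since dist(u, v) > 2m, the u-side of
   one pair is never equal or adjacent to the v-side of another pair, hence
   swapping pairs keeps the map a_i |-> b_i a partial isomorphism. *)

Set Implicit Arguments.
Unset Strict Implicit.
Unset Printing Implicit Defensive.

Section Walks.
Variables (T : finType) (e : rel T).

Lemma within_succ k x y : within e k x y -> within e k.+1 x y.
Proof. by move=> wk /=; rewrite wk. Qed.

Lemma within_leq k l x y : k <= l -> within e k x y -> within e l x y.
Proof. by move=> /subnK <- wk; elim: (l - k) => //= n IH; rewrite IH. Qed.

Lemma within_cat k l x y z :
  within e k x y -> within e l y z -> within e (k + l) x z.
Proof.
elim: k x => [|k IH] x /=; first by move=> /eqP ->.
case/orP=> [wk wl|/existsP [w /andP [exw wk]] wl].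
  exact/within_succ/IH.
by apply/orP; right; apply/existsP; exists w; rewrite exw (IH _ wk wl).
Qed.

Lemma within_step k x y z : within e k x y -> e y z -> within e k.+1 x z.
Proof.
move=> wk eyz; rewrite -addn1; apply: within_cat wk _.
by apply/orP; right; apply/existsP; exists z; rewrite eyz eqxx.
Qed.

Hypothesis e_sym : symmetric e.

Lemma within_sym k x y : within e k x y -> within e k y x.
Proof.
elim: k x y => [|k IH] x y /=; first by rewrite eq_sym.
case/orP=> [/IH wk|/existsP [w /andP [exw /IH wk]]]; first by rewrite wk.
by apply: within_step wk _; rewrite e_sym.
Qed.

Lemma far_apart N k l u v p q : ~~ within e N u v -> k + l < N ->
  within e k u p -> within e l v q -> (p == q) = false /\ e p q = false.
Proof.
move=> farN klN up vq; have qv := within_sym vq.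
split; apply/negbTE/negP; [move=> /eqP pq | move=> epq]; apply: (negP farN).
  by subst q; apply: within_leq (within_cat up qv); lia.
by apply: within_leq (within_cat (within_step up epq) qv); lia.
Qed.

End Walks.

Section DifferentialGame.
Variables (T : finType) (e : rel T) (I : Type) (lab : I -> pred T).
Hypothesis e_sym : symmetric e.

Lemma in_symdiff_nbhd a b w :
  (w \in symdiff_nbhd e a b) = (e a w != e b w).
Proof. by rewrite !inE; case: (e a w); case: (e b w). Qed.

Lemma symdiff_nbhdC a b : symdiff_nbhd e a b = symdiff_nbhd e b a.
Proof. exact: setUC. Qed.

Lemma EFwin_piso k Q (x0 : T) : EFwin e lab k Q -> piso e lab Q.
Proof.
elim: k Q => [|k IH] Q //= [forth _]; have [y /IH isoQ] := forth x0.
by move=> x z xQ zQ; apply: isoQ; rewrite mem_rcons inE ?xQ ?zQ orbT.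
Qed.

Lemma piso_rcons_edge Q n s :
  piso e lab (rcons Q n) -> s \in Q -> e s.1 n.1 = e s.2 n.2.
Proof.
move=> iso sQ; have sQn : s \in rcons Q n by rewrite mem_rcons inE sQ orbT.
have nQn : n \in rcons Q n by rewrite mem_rcons mem_head.
by have [_ []] := iso s n sQn nQn.
Qed.

Lemma EFwin_answer k Q s x : EFwin e lab k.+1 Q -> s \in Q ->
  e s.1 x || e s.2 x ->
  exists y n, [/\ n = (x, y) \/ n = (y, x), EFwin e lab k (rcons Q n),
                  e s.1 n.1 & e s.2 n.2].
Proof.
case=> forth back sQ /orP [sx|sx].
  have [y win] := forth x; exists y, (x, y); split=> //; first by left.
  by rewrite /= -(piso_rcons_edge (EFwin_piso x win) sQ).
have [y win] := back x; exists y, (y, x); split=> //; first by right.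
by rewrite /= (piso_rcons_edge (EFwin_piso x win) sQ).
Qed.

Definition sub_upto_swap (P Q : seq (T * T)) : Prop :=
  forall z, z \in P -> z \in Q \/ (z.2, z.1) \in Q.

Definition cross_compatible (Q : seq (T * T)) : Prop :=
  forall s t, s \in Q -> t \in Q ->
    (s.1 == t.2) = (s.2 == t.1) /\ e s.1 t.2 = e s.2 t.1.

Lemma sub_upto_swap_rcons P Q n :
  sub_upto_swap P Q -> sub_upto_swap (rcons P n) (rcons Q n) /\
                       sub_upto_swap (rcons P (n.2, n.1)) (rcons Q n).
Proof.
case: n => n1 n2 PQ; split=> z; rewrite mem_rcons inE => /orP [/eqP ->|/PQ [zQ|zQ]];
  [left | left | right | right | left | right];
  by rewrite mem_rcons inE /= ?eqxx ?zQ ?orbT.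
Qed.

Lemma piso_sub_upto_swap P Q : piso e lab Q -> cross_compatible Q ->
  sub_upto_swap P Q -> piso e lab P.
Proof.
move=> isoQ crossQ PQ [x1 x2] [y1 y2] /PQ /= xQ /PQ /= yQ.
have lab_eq a b l : (a, b) \in Q \/ (b, a) \in Q -> lab l a = lab l b.
  by case=> abQ; have [_ [_ ->]] := isoQ _ _ abQ abQ.
suff [-> ->] : (x1 == y1) = (x2 == y2) /\ e x1 y1 = e x2 y2.
  by do 2!split=> //; move=> l; apply: lab_eq.
case: xQ yQ => xQ [] yQ.
- by have [-> [-> _]] := isoQ _ _ xQ yQ.
- exact: crossQ xQ yQ.
- have [] := crossQ _ _ yQ xQ; rewrite /= eq_sym [x2 == _]eq_sym.
  by rewrite e_sym [e x2 _]e_sym.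
- by have [-> [-> _]] := isoQ _ _ xQ yQ.
Qed.

Variables u v : T.

Definition rooted_within d (Q : seq (T * T)) : Prop :=
  forall s, s \in Q -> within e d u s.1 /\ within e d v s.2.

Section Extension.
Variables (N d : nat) (Q : seq (T * T)) (s n : T * T).
Hypotheses (farN : ~~ within e N u v) (dN : 2 * d.+1 <= N).
Hypotheses (rootQ : rooted_within d Q) (sQ : s \in Q).
Hypotheses (sn1 : e s.1 n.1) (sn2 : e s.2 n.2).

Let un1 : within e d.+1 u n.1.
Proof. by apply: within_step sn1; have [] := rootQ sQ. Qed.

Let vn2 : within e d.+1 v n.2.
Proof. by apply: within_step sn2; have [] := rootQ sQ. Qed.

Lemma rooted_within_rcons : rooted_within d.+1 (rcons Q n).
Proof.
move=> t; rewrite mem_rcons inE => /orP [/eqP -> //|/rootQ [ut vt]].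
by split; apply: within_succ.
Qed.

Lemma rcons_in_symdiff_nbhd :
  n.1 \in symdiff_nbhd e s.1 s.2 /\ n.2 \in symdiff_nbhd e s.1 s.2.
Proof.
have [us vs] := rootQ sQ; rewrite !in_symdiff_nbhd sn1 sn2.
have [_ ->] := far_apart e_sym farN (ltac:(lia) : d + d.+1 < N) us vn2.
by rewrite e_sym; have [_ ->] := far_apart e_sym farN (ltac:(lia) : d.+1 + d < N) un1 vs.
Qed.

Lemma cross_compatible_rcons :
  cross_compatible Q -> cross_compatible (rcons Q n).
Proof.
have new_old t : t \in Q -> (n.1 == t.2) = false /\ e n.1 t.2 = false /\
                            (t.1 == n.2) = false /\ e t.1 n.2 = false.
  move=> /rootQ [ut vt].
  have [-> ->] := far_apart e_sym farN (ltac:(lia) : d.+1 + d < N) un1 vt.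
  by have [-> ->] := far_apart e_sym farN (ltac:(lia) : d + d.+1 < N) ut vn2.
move=> crossQ a b; rewrite !mem_rcons !inE.
case/orP=> [/eqP ->|aQ] /orP [/eqP ->|bQ].
- by rewrite eq_sym e_sym.
- by have [-> [-> [na nb]]] := new_old _ bQ; rewrite eq_sym na e_sym nb.
- by have [na [nb [-> ->]]] := new_old _ aQ; rewrite eq_sym na e_sym nb.
- exact: crossQ.
Qed.

End Extension.

Lemma DiffWin_of_EFwin k d P Q : ~~ within e (2 * (d + k)) u v ->
  EFwin e lab k Q -> sub_upto_swap P Q -> cross_compatible Q ->
  rooted_within d Q -> DiffWin e lab k P.
Proof.
elim: k d P Q => [|k IH] d P Q farN win PQ crossQ rootQ.
  exact: piso_sub_upto_swap win crossQ PQ.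
right=> z /PQ zQ x; pose s := if z \in Q then z else (z.2, z.1).
have sQ : s \in Q by rewrite /s; case: ifP zQ => // _ [].
have -> : symdiff_nbhd e z.1 z.2 = symdiff_nbhd e s.1 s.2.
  by rewrite /s; case: ifP => //= _; rewrite symdiff_nbhdC.
move=> xD; have sx : e s.1 x || e s.2 x.
  by move: xD; rewrite in_symdiff_nbhd; case: (e s.1 x); case: (e s.2 x).
have [y [n [xy win_n sn1 sn2]]] := EFwin_answer win sQ sx.
have dN : 2 * d.+1 <= 2 * (d + k.+1) by lia.
have [n1D n2D] := rcons_in_symdiff_nbhd farN dN rootQ sQ sn1 sn2.
have farN' : ~~ within e (2 * (d.+1 + k)) u v by rewrite addSnnS.
have crossQn := cross_compatible_rcons farN dN rootQ sQ sn1 sn2 crossQ.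
have rootQn := rooted_within_rcons rootQ sQ sn1 sn2.
have [Pn Pn'] := sub_upto_swap_rcons n PQ.
have yD : y \in symdiff_nbhd e s.1 s.2 by case: xy n1D n2D => -> /=.
split; exists y => //; apply: IH farN' win_n _ crossQn rootQn;
  by case: xy Pn Pn' => -> /=.
Qed.

End DifferentialGame.

Theorem lemma6p2 (T : finType) (e : rel T) (I : Type) (lab : I -> pred T)
  (e_sym : symmetric e) (e_irr : irreflexive e) (m : nat) (u v : T) :
  EFequiv e lab m u v ->
  ~~ within e (2 * m) u v ->
  Dequiv e lab m u v.
Proof.
move=> win farN.
apply: (DiffWin_of_EFwin e_sym (d := 0) (P := [:: (u, v)]) farN win).
- by move=> z; left.
- by move=> s t; rewrite !inE => /eqP -> /eqP ->; rewrite eq_sym e_sym.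
- by move=> s; rewrite inE => /eqP ->; rewrite /= !eqxx.
Qed.
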